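(* Let $G=\langle\sigma\rangle\times\langle\tau\rangle$ be a finite bicyclic group (direct product of the cyclic groups generated by $\sigma$ and $\tau$) and $M$ a $G$-module, written multiplicatively. For $H\le G$ let $M^H$ denote the $H$-invariants, and let $N_\sigma:M^{\langle\tau\rangle}\to M^G$ be the norm map $x\mapsto\prod_{j=0}^{\operatorname{ord}\sigma-1}\sigma^j(x)$. Then the kernel of the restriction map $$H^1(G,M)\to H^1(\langle\sigma\rangle,M)\times H^1(\langle\tau\rangle,M)\times H^1(\langle\sigma\tau\rangle,M)$$ is isomorphic to $$Q=\bigl(\ker(N_\sigma)\cap M^{\sigma-1}\cap M^{\sigma\tau-1}\bigr)\big/\bigl(M^{\langle\tau\rangle}\bigr)^{\sigma-1},$$ where for $g\in G$ and a subgroup $N\subseteq M$, $N^{g-1}=\{g(x)x^{-1}:x\in N\}$. *)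

From HB Require Import structures.
From mathcomp Require Import all_boot all_order all_algebra all_fingroup.
Set Implicit Arguments. Unset Strict Implicit. Unset Printing Implicit Defensive.
Import GRing.Theory.
Local Open Scope ring_scope.

Section Defs.
Variables (gT : finGroupType) (M : zmodType) (act : gT -> M -> M).

Definition cocycle (f : {ffun gT -> M}) : Prop :=
  forall x y : gT, f (x * y)%g = f x + act x (f y).

Definition coboundary_on (H : {set gT}) (f : {ffun gT -> M}) : Prop :=
  exists m : M, forall h, h \in H -> f h = act h m - m.

Definition fixed_in (H : {set gT}) (m : M) : Prop :=
  forall h, h \in H -> act h m = m.

Definition in_gm1 (g : gT) (N : M -> Prop) (x : M) : Prop :=
  exists y, N y /\ x = act g y - y.

Definition norm_map (s : gT) (m : M) : M :=
  \sum_(j < #[s]%g) act (s ^+ j)%g m.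

End Defs.

(* An isomorphism of quotient groups A/B ~= C/D (with B <= A subgroups of U,
   D <= C subgroups of V), given by a map on representatives. *)
Definition quot_iso (U V : zmodType) (A B : U -> Prop) (C D : V -> Prop) : Prop :=
  exists phi : U -> V,
    [/\ forall u, A u -> C (phi u),
        forall u v, A u -> A v -> D (phi (u + v) - phi u - phi v),
        forall u, A u -> (D (phi u) <-> B u)
      & forall w, C w -> exists2 u, A u & D (w - phi u)].

From HB Require Import structures.
From mathcomp Require Import all_boot all_order all_algebra all_fingroup.
From Stdlib Require Import ClassicalEpsilon.
Import GRing.Theory.
Local Open Scope ring_scope.
Set Implicit Arguments. Unset Strict Implicit. Unset Printing Implicit Defensive.

(* Write [cobound m g = g(m) - m] for the principal crossed homomorphism of
   m : M.  Let f be a cocycle whose class lies in the kernel of the three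
   restrictions.  Its restriction to <tau> is [cobound m] for some m (chosen
   by the axiom of choice), and the normalized cocycle f - cobound m vanishes
   on <tau>.  Its value at sigma is tau-invariant and equals its value at
   sigma*tau; since f is a coboundary on <sigma> and on <sigma tau>, that
   value lies in ker(N_sigma) /\ M^{sigma-1} /\ M^{sigma tau - 1}.  The map
   f |-> (f - cobound m)(sigma) is additive modulo (M^<tau>)^{sigma-1} (the
   ambiguity in m), its kernel is exactly the coboundaries (a cocycle is
   determined by its values at the generators sigma and tau), and it is
   onto: w = sigma(m1) - m1 lifts to the cocycle x*y |-> cobound m1 x
   (x in <sigma>, y in <tau>), using that G is the direct product. *)

Section Action.
Variables (gT : finGroupType) (M : zmodType) (act : gT -> M -> M).
Hypothesis act1 : forall m, act 1%g m = m.
Hypothesis actM : forall g h m, act (g * h)%g m = act g (act h m).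
Hypothesis actD : forall g m n, act g (m + n) = act g m + act g n.

Lemma act0 g : act g 0 = 0.
Proof. by apply: (addrI (act g 0)); rewrite -actD !addr0. Qed.

Lemma actN g m : act g (- m) = - act g m.
Proof. by apply/eqP; rewrite -addr_eq0 -actD addNr act0. Qed.

Lemma actB g m n : act g (m - n) = act g m - act g n.
Proof. by rewrite actD actN. Qed.

Definition cobound (m : M) (g : gT) : M := act g m - m.

Lemma coboundD m n g : cobound (m + n) g = cobound m g + cobound n g.
Proof. by rewrite /cobound actD opprD addrACA. Qed.

Lemma coboundN m g : cobound (- m) g = - cobound m g.
Proof. by rewrite /cobound actN opprK opprB addrC. Qed.

Lemma coboundB m n g : cobound (m - n) g = cobound m g - cobound n g.
Proof. by rewrite coboundD coboundN. Qed.

Lemma cobound1 m : cobound m 1%g = 0.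
Proof. by rewrite /cobound act1 subrr. Qed.

Lemma cobound_eq0 m g : cobound m g = 0 <-> act g m = m.
Proof. by rewrite /cobound; split=> [/eqP|->]; [rewrite subr_eq0 => /eqP|rewrite subrr]. Qed.

Lemma coboundM m x y : cobound m (x * y)%g = cobound m x + act x (cobound m y).
Proof. by rewrite /cobound actB actM [RHS]addrC addrA subrK. Qed.

Lemma cocycle1 f : cocycle act f -> f 1%g = 0.
Proof.
move=> cf; have /esym/eqP := cf 1%g 1%g.
by rewrite mulg1 act1 -subr_eq0 addrK => /eqP.
Qed.

Lemma cocycle_subr f m : cocycle act f -> cocycle act [ffun g => f g - cobound m g].
Proof. by move=> cf x y; rewrite !ffunE cf coboundM [act x (f y - _)]actB opprD addrACA. Qed.

Lemma cocycle_eq_on_cycle f m x : cocycle act f -> f x = cobound m x ->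
  forall g, g \in <[x]>%g -> f g = cobound m g.
Proof.
move=> cf fx g /cycleP [k ->]; elim: k => [|k IH].
  by rewrite expg0 cocycle1 // cobound1.
by rewrite expgS cf fx IH coboundM.
Qed.

(* The norm of s(m) - m along <[s]> telescopes to zero. *)
Lemma norm_map_cobound s m : norm_map act s (cobound m s) = 0.
Proof.
rewrite /norm_map -(big_mkord xpredT (fun j => act (s ^+ j) (cobound m s))).
rewrite (eq_bigr (fun j => act (s ^+ j.+1) m - act (s ^+ j) m)); last first.
  by move=> j _; rewrite /cobound actB -actM -expgSr.
by rewrite telescope_sumr // expg_order expg0 act1 subrr.
Qed.

Lemma cobound_fixed_on_cycle m s h : commute s h ->
  act h (cobound m s) = cobound m s ->
  forall x, x \in <[s]>%g -> act h (cobound m x) = cobound m x.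
Proof.
move=> csh hfix x /cycleP [i ->]; elim: i => [|i IH].
  by rewrite expg0 cobound1 act0.
by rewrite expgS coboundM actD hfix -actM -csh actM IH.
Qed.

Section Bicyclic.
Variables sigma tau : gT.
Hypothesis hG : (<[sigma]> \x <[tau]>)%g = [set: gT].

Lemma bicyclic_commute x y : x \in <[sigma]>%g -> y \in <[tau]>%g -> commute x y.
Proof. by have [_ _ /centsP cst _] := dprodP hG => Hx Hy; apply/esym/cst. Qed.

Lemma bicyclic_decomp g :
  exists2 x, x \in <[sigma]>%g & exists2 y, y \in <[tau]>%g & g = (x * y)%g.
Proof.
have [_ defG _ _] := dprodP hG.
have : g \in (<[sigma]> * <[tau]>)%g by rewrite defG inE.
by case/mulsgP => x y Hx Hy ->; exists x => //; exists y.
Qed.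

Lemma bicyclic_uniq x1 y1 x2 y2 : x1 \in <[sigma]>%g -> y1 \in <[tau]>%g ->
  x2 \in <[sigma]>%g -> y2 \in <[tau]>%g -> (x1 * y1 = x2 * y2)%g -> x1 = x2.
Proof.
have [_ _ _ tI] := dprodP hG => Hx1 Hy1 Hx2 Hy2 E.
have E2 : (x2^-1 * x1 = y2 * y1^-1)%g by rewrite -[x1](mulgK y1) E mulgA mulKg.
have : (x2^-1 * x1)%g \in (<[sigma]> :&: <[tau]>)%g.
  by rewrite inE groupM ?groupV //= E2 groupM ?groupV.
by rewrite tI => /set1P /eqP; rewrite -eq_mulVg1 => /eqP.
Qed.

Definition sigma_part (g : gT) : gT :=
  odflt 1%g [pick x in <[sigma]>%g | [exists y in <[tau]>%g, g == (x * y)%g]].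

Lemma sigma_partE x y : x \in <[sigma]>%g -> y \in <[tau]>%g ->
  sigma_part (x * y)%g = x.
Proof.
move=> Hx Hy; rewrite /sigma_part; case: pickP => /= [x' | none].
  by case/andP=> Hx' /exists_inP [y' Hy' /eqP E]; exact: bicyclic_uniq Hx' Hy' Hx Hy (esym E).
by have /negbT/negP[] := none x; rewrite Hx; apply/exists_inP; exists y.
Qed.

Lemma cocycle_eq_cobound f m : cocycle act f ->
  f sigma = cobound m sigma -> f tau = cobound m tau ->
  forall g, f g = cobound m g.
Proof.
move=> cf fs ft g; have [x Hx [y Hy ->]] := bicyclic_decomp g.
by rewrite cf (cocycle_eq_on_cycle cf fs Hx) (cocycle_eq_on_cycle cf ft Hy) coboundM.
Qed.

Lemma cocycle_vanishing_on_tau f : cocycle act f ->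
  (forall h, h \in <[tau]>%g -> f h = 0) ->
  fixed_in act <[tau]>%g (f sigma) /\ f (sigma * tau)%g = f sigma.
Proof.
move=> cf f0; split; last by rewrite cf (f0 tau (cycle_id tau)) act0 addr0.
move=> h Hh; have := cf sigma h.
by rewrite (f0 h Hh) act0 addr0 (bicyclic_commute (cycle_id sigma) Hh) cf (f0 h Hh) add0r.
Qed.

Definition lift_cocycle (m : M) : {ffun gT -> M} :=
  [ffun g => cobound m (sigma_part g)].

Lemma lift_cocycleE m x y : x \in <[sigma]>%g -> y \in <[tau]>%g ->
  lift_cocycle m (x * y)%g = cobound m x.
Proof. by move=> Hx Hy; rewrite ffunE sigma_partE. Qed.

Lemma lift_cocycle_cocycle m : fixed_in act <[tau]>%g (cobound m sigma) ->
  cocycle act (lift_cocycle m).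
Proof.
move=> Fw g h; have [x Hx [y Hy ->]] := bicyclic_decomp g.
have [x' Hx' [y' Hy' ->]] := bicyclic_decomp h.
have -> : (x * y * (x' * y') = (x * x') * (y * y'))%g.
  by rewrite !mulgA -(mulgA x y x') -(bicyclic_commute Hx' Hy) !mulgA.
rewrite !lift_cocycleE ?groupM // actM coboundM.
by rewrite (cobound_fixed_on_cycle (bicyclic_commute (cycle_id _) Hy) (Fw y Hy)).
Qed.

Definition res_kernel (f : {ffun gT -> M}) : Prop :=
  [/\ cocycle act f, coboundary_on act <[sigma]>%g f,
      coboundary_on act <[tau]>%g f & coboundary_on act <[(sigma * tau)%g]>%g f].

Definition global_coboundary (f : {ffun gT -> M}) : Prop :=
  cocycle act f /\ coboundary_on act [set: gT] f.

Definition Q_num (x : M) : Prop :=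
  [/\ fixed_in act <[tau]>%g x, norm_map act sigma x = 0,
      in_gm1 act sigma (fun _ => True) x & in_gm1 act (sigma * tau)%g (fun _ => True) x].

Definition Q_den : M -> Prop := in_gm1 act sigma (fixed_in act <[tau]>%g).

Definition tau_trivializer (f : {ffun gT -> M}) : M :=
  epsilon (inhabits 0) (fun m => forall h, h \in <[tau]>%g -> f h = cobound m h).

Lemma tau_trivializerP f : coboundary_on act <[tau]>%g f ->
  forall h, h \in <[tau]>%g -> f h = cobound (tau_trivializer f) h.
Proof. exact: epsilon_spec. Qed.

Definition phi (f : {ffun gT -> M}) : M :=
  f sigma - cobound (tau_trivializer f) sigma.

Lemma phi_Q_num f : res_kernel f -> Q_num (phi f).
Proof.
move=> [cf [m1 H1] /tau_trivializerP Hm [m2 H2]].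
set m := tau_trivializer f in Hm; pose f' := [ffun g => f g - cobound m g].
have f'0 h : h \in <[tau]>%g -> f' h = 0 by move=> Hh; rewrite ffunE Hm // subrr.
have [Ff' f'st] := cocycle_vanishing_on_tau (cocycle_subr m cf) f'0.
have phiE : phi f = f' sigma by rewrite ffunE.
have f'S : f' sigma = cobound (m1 - m) sigma by rewrite ffunE H1 ?cycle_id // coboundB.
rewrite phiE; split => //.
- by rewrite f'S norm_map_cobound.
- by exists (m1 - m); rewrite f'S.
- exists (m2 - m); split => //; rewrite -f'st ffunE H2 ?cycle_id //.
  symmetry; exact: coboundB.
Qed.

(* phi is additive modulo the denominator: the trivializers of f, g and f + g
   are compatible up to a tau-invariant element. *)
Lemma phi_additive f g : res_kernel f -> res_kernel g ->
  Q_den (phi (f + g) - phi f - phi g).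
Proof.
move=> [_ _ Htf _] [_ _ Htg _].
have Hf := tau_trivializerP Htf; have Hg := tau_trivializerP Htg.
have Htfg : coboundary_on act <[tau]>%g (f + g).
  exists (tau_trivializer f + tau_trivializer g) => h Hh.
  by rewrite ffunE Hf // Hg //; symmetry; exact: coboundD.
have Hfg := tau_trivializerP Htfg.
set a := tau_trivializer (f + g) in Hfg *; set b := tau_trivializer f in Hf *.
set c := tau_trivializer g in Hg *.
exists (b + c - a); split.
  move=> h Hh; apply/cobound_eq0.
  by rewrite coboundB coboundD -Hf // -Hg // -Hfg // ffunE subrr.
rewrite -[RHS]/(cobound (b + c - a) sigma) coboundB coboundD /phi ffunE -/a -/b -/c.
move: (f sigma) (g sigma) (cobound a sigma) (cobound b sigma) (cobound c sigma) => x y A B C.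
by rewrite -addrA -opprD addrACA -opprD opprB addrC addrA subrK.
Qed.

Lemma phi_kernel f : res_kernel f -> Q_den (phi f) <-> global_coboundary f.
Proof.
move=> [cf _ Ht _]; have Hm := tau_trivializerP Ht.
set m := tau_trivializer f in Hm *; split.
- move=> [y [Fy E]]; split => //; exists (m + y) => g _.
  pose f' := [ffun g => f g - cobound m g].
  have f'E : forall g, f' g = cobound y g.
    apply: (cocycle_eq_cobound (cocycle_subr m cf)); rewrite ffunE; first exact: E.
    by rewrite Hm ?cycle_id // subrr; symmetry; apply/cobound_eq0/Fy/cycle_id.
  by rewrite -[RHS]/(cobound (m + y) g) coboundD addrC -f'E ffunE subrK.
- move=> [_ [m0 H0]]; exists (m0 - m); split; last first.
    by rewrite -[RHS]/(cobound (m0 - m) sigma) coboundB /phi H0 ?inE.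
  by move=> h Hh; apply/cobound_eq0; rewrite coboundB -Hm // H0 ?inE // subrr.
Qed.

(* Every element of the numerator is hit, modulo the denominator, by the lift
   of sigma(m1) - m1. *)
Lemma phi_surjective w : Q_num w -> exists2 f, res_kernel f & Q_den (w - phi f).
Proof.
move=> [Fw _ [m1 [_ E1]] [m2 [_ E2]]].
pose f := lift_cocycle m1.
have fs x : x \in <[sigma]>%g -> f x = cobound m1 x.
  by move=> Hx; rewrite -{1}[x]mulg1 lift_cocycleE.
have ft y : y \in <[tau]>%g -> f y = 0.
  by move=> Hy; rewrite -{1}[y]mul1g lift_cocycleE ?cobound1.
have cf : cocycle act f by apply: lift_cocycle_cocycle; rewrite /cobound -E1.
have Kf : res_kernel f.
  split => //; first by exists m1.
    by exists 0 => h Hh; rewrite ft // act0 subrr.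
  exists m2 => h Hh; apply: (cocycle_eq_on_cycle cf _ Hh).
  by rewrite lift_cocycleE ?cycle_id // /cobound -E1 E2.
exists f => //; have [_ _ Ht _] := Kf; have Hm := tau_trivializerP Ht.
exists (tau_trivializer f); split.
  by move=> h Hh; apply/cobound_eq0; rewrite -Hm // ft.
by rewrite /phi fs ?cycle_id // /cobound -E1 opprB addrC subrK.
Qed.

End Bicyclic.
End Action.

Theorem mainTheorem17 (gT : finGroupType) (sigma tau : gT)
    (M : zmodType) (act : gT -> M -> M)
    (hG : (<[sigma]> \x <[tau]>)%g = [set: gT])
    (act1 : forall m, act 1%g m = m)
    (actM : forall g h m, act (g * h)%g m = act g (act h m))
    (actD : forall g m n, act g (m + n) = act g m + act g n) :
  @quot_iso {ffun gT -> M} M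
    (* kernel of H^1(G,M) -> H^1(<s>,M) x H^1(<t>,M) x H^1(<st>,M) *)
    (fun f => [/\ cocycle act f, coboundary_on act <[sigma]>%g f,
                  coboundary_on act <[tau]>%g f
                & coboundary_on act <[(sigma * tau)%g]>%g f])
    (fun f => cocycle act f /\ coboundary_on act [set: gT] f)
    (* ker(N_sigma) /\ M^{sigma-1} /\ M^{sigma tau - 1} *)
    (fun x => [/\ fixed_in act <[tau]>%g x, norm_map act sigma x = 0,
                  in_gm1 act sigma (fun _ => True) x
                & in_gm1 act (sigma * tau)%g (fun _ => True) x])
    (* (M^<tau>)^{sigma-1} *)
    (in_gm1 act sigma (fixed_in act <[tau]>%g)).
Proof.
exists (phi act sigma tau); split.
- exact: phi_Q_num.
- exact: phi_additive.
- exact: phi_kernel.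
- exact: phi_surjective.
Qed.
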